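(* (i) For every integer $n\ge 0$, $D_{n,3}(1,\tfrac14)=\dfrac{3n-1}{2^n}$ in $\mathbb{F}_q$, and for every $y\in\mathbb{F}_{q^2}$ with $y\ne\tfrac12$, $$D_{n,3}(1,y(1-y))=\frac{(2-y)y^n-(y+1)(1-y)^n}{2y-1}.$$ (ii) If $n_1,n_2$ are positive integers with $n_1\equiv n_2\pmod{q^2-1}$, then $D_{n_1,3}(1,x_0)=D_{n_2,3}(1,x_0)$ for every $x_0\in\mathbb{F}_q\setminus\{\tfrac14\}$.
   Context: Let $p>3$ be prime, $q=p^e$ ($e\ge1$), $\mathbb{F}_q$ the field with $q$ elements and $\mathbb{F}_{q^2}$ its quadratic extension. For $n\ge 1$ and $a\in\mathbb{F}_q$, $D_{n,3}(a,x)=\sum_{i=0}^{\lfloor n/2\rfloor}\frac{n-3i}{n-i}\binom{n-i}{i}(-x)^i a^{n-2i}$, where each coefficient $\frac{n-3i}{n-i}\binom{n-i}{i}$ is an integer read modulo $p$; and $D_{0,3}(a,x)=-1$. The polynomial $D_{n,3}(1,x)\in\mathbb{F}_q[x]$ is evaluated at elements of $\mathbb{F}_{q^2}$. *)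

From HB Require Import structures.
From mathcomp Require Import all_boot all_order all_algebra all_field.
Set Implicit Arguments. Unset Strict Implicit. Unset Printing Implicit Defensive.
Import Order.TTheory GRing.Theory Num.Theory.
Local Open Scope ring_scope.

(* The integer coefficient (n-3i)/(n-i) * C(n-i,i) of D_{n,3}.
   The division is exact for 0 <= i <= n/2, n >= 1 (integer division divz). *)
Definition Dcoef (n i : nat) : int :=
  (((n%:Z - (3 * i)%N%:Z) * ('C(n - i, i))%:Z) %/ (n - i)%N%:Z)%Z.

(* D_{n,3}(a,x) as a polynomial in x over a commutative ring R,
   coefficients read in R (i.e. modulo the characteristic);
   D_{0,3}(a,x) = -1. *)
Definition Dpoly (R : comNzRingType) (n : nat) (a : R) : {poly R} :=
  if n is 0 then -1 else
  \sum_(i < n./2.+1) ((Dcoef n i)%:~R * a ^+ (n - 2 * i)) *: (- 'X) ^+ i.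

From HB Require Import structures.
From mathcomp Require Import all_boot all_order all_algebra all_field.
From mathcomp Require Import zify ring.
Set Implicit Arguments. Unset Strict Implicit. Unset Printing Implicit Defensive.
Import GRing.Theory.
Local Open Scope ring_scope.

(* Put E_n(x) = \sum_i 'C(n - i, i) (-x)^i, the Dickson polynomial of the second
   kind at a = 1; it obeys E_(n+2) = E_(n+1) - x E_n, and the coefficient identity
   behind [DcoefS] gives D_(n+2,3)(1, x) = E_(n+2)(x) + 2 x E_n(x).  At
   x = y (1 - y) the characteristic roots of the recurrence are y and 1 - y, which
   yields the closed form of (i); at x = 1/4 they collapse to the double root 1/2.
   For (ii), 1 - 4 x0 is a square in F_(q^2), so x0 = y (1 - y) with y in F_(q^2),
   y <> 1/2, and the closed form only involves powers y^n, (1 - y)^n, which depend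
   on n modulo q^2 - 1. *)

Lemma big_ord_shrink (R : nmodType) (M N : nat) (f : nat -> R) : (M <= N)%N ->
  (forall i, (M <= i < N)%N -> f i = 0) ->
  \sum_(i < N) f i = \sum_(i < M) f i.
Proof.
move=> le_MN f0; rewrite (big_ord_widen N f le_MN) [RHS]big_mkcond /=.
apply: eq_bigr => i _; case: ifP => // /negbT; rewrite -leqNgt => le_Mi.
by rewrite f0 // le_Mi ltn_ord.
Qed.

Lemma binS_sub n j : 'C(n.+1 - j, j.+1) = ('C(n - j, j.+1) + 'C(n - j, j))%N.
Proof.
have [le_jn | lt_nj] := leqP j n; first by rewrite subSn // binS.
have -> : (n.+1 - j = 0)%N by lia.
have -> : (n - j = 0)%N by lia.
by rewrite !bin0n; case: j lt_nj.
Qed.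

Section Dickson2.
Variable R : comNzRingType.

Definition dickson2 (n : nat) (x : R) : R :=
  \sum_(i < n.+1) 'C(n - i, i)%:R * (- x) ^+ i.

Lemma dickson2E N n x : (n < N)%N ->
  dickson2 n x = \sum_(i < N) 'C(n - i, i)%:R * (- x) ^+ i.
Proof.
move=> lt_nN.
rewrite (@big_ord_shrink _ _ _ (fun i => 'C(n - i, i)%:R * (- x) ^+ i) lt_nN) //.
by move=> i /andP[lt_ni _]; rewrite bin_small ?mul0r //; lia.
Qed.

Lemma dickson2SS n x :
  dickson2 n.+2 x = dickson2 n.+1 x - x * dickson2 n x.
Proof.
rewrite (@dickson2E n.+3 n.+1) // (@dickson2E n.+2 n) // /dickson2.
rewrite (big_ord_recl n.+2) (big_ord_recl n.+2) !subn0 !bin0 -addrA.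
congr (_ + _).
rewrite mulr_sumr -sumrB; apply: eq_bigr => j _.
rewrite lift0 /= !subSS binS_sub natrD exprS; ring.
Qed.

Lemma dickson2_unique x (f : nat -> R) : f 0%N = 1 -> f 1%N = 1 ->
  (forall n, f n.+2 = f n.+1 - x * f n) -> forall n, dickson2 n x = f n.
Proof.
move=> f0 f1 fSS n.
suff : dickson2 n x = f n /\ dickson2 n.+1 x = f n.+1 by case.
elim: n => [|n [IHn IHn1]].
  by rewrite /dickson2 !big_ord_recl !big_ord0 /= bin0 mul1r expr0 mul0r !addr0 f0 f1.
split; first exact: IHn1.
by rewrite dickson2SS fSS IHn IHn1.
Qed.

End Dickson2.

Lemma Dcoef0 m : (0 < m)%N -> Dcoef m 0 = 1.
Proof.
move=> m_gt0; rewrite /Dcoef muln0 subn0 bin0 subr0 mulr1 divzz.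
by rewrite eqz_nat -lt0n m_gt0.
Qed.

Lemma Dcoef_gt_half m i : (m./2 < i)%N -> Dcoef m i = 0.
Proof.
move=> lt_half_i; rewrite /Dcoef bin_small ?mulr0 ?div0z //.
by have := leq_divM m 2; rewrite -divn2 in lt_half_i; lia.
Qed.

(* [mul_bin_diag] gives [(m - j - 1) 'C(m - j - 2, j) = (j + 1) 'C(m - j - 1, j + 1)],
   which makes the division in [Dcoef] exact. *)
Lemma DcoefS m j : (2 <= m)%N -> (j < m)%N ->
  Dcoef m j.+1 = 'C(m - j.+1, j.+1)%:Z - 2 * 'C(m.-2 - j, j)%:Z.
Proof.
move=> m_ge2 lt_jm; rewrite /Dcoef.
have [lt_Sjm | le_mSj] := ltnP j.+1 m.
  have := mul_bin_diag (m - j.+1) j.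
  rewrite (_ : (m - j.+1).-1 = m.-2 - j)%N; last by lia.
  set a := 'C(m - j.+1, j.+1); set b := 'C(m.-2 - j, j) => diag.
  have -> : (m%:Z - (3 * j.+1)%N%:Z) * a%:Z = (a%:Z - 2 * b%:Z) * (m - j.+1)%N%:Z.
    by clear -diag lt_Sjm; nia.
  by rewrite mulzK // eqz_nat; lia.
have -> : j.+1 = m by lia.
have -> : (m.-2 - j = 0)%N by lia.
by rewrite subnn !bin_small ?mulr0 ?div0z //; lia.
Qed.

Lemma Dpoly0_horner (R : comNzRingType) (x : R) : (Dpoly 0 1).[x] = -1.
Proof. by rewrite /Dpoly hornerN hornerC. Qed.

Lemma Dpoly1_horner (R : comNzRingType) (x : R) : (Dpoly 1 1).[x] = 1.
Proof. by rewrite /Dpoly big_ord1 Dcoef0 // hornerZ expr0 hornerC !mulr1. Qed.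

Lemma DpolySS_horner (R : comNzRingType) n (x : R) :
  (Dpoly n.+2 1).[x] = dickson2 n.+2 x + 2 * x * dickson2 n x.
Proof.
rewrite /Dpoly horner_sum.
under eq_bigr do rewrite hornerZ horner_exp hornerN hornerX expr1n mulr1.
rewrite -(@big_ord_shrink _ _ n.+3 (fun i => (Dcoef n.+2 i)%:~R * (- x) ^+ i)); last first.
- by move=> i /andP[lt_half_i _]; rewrite Dcoef_gt_half // mul0r.
- by rewrite ltnS -divn2 leq_div.
rewrite (@dickson2E _ n.+2 n) // /dickson2 (big_ord_recl n.+2) (big_ord_recl n.+2).
rewrite Dcoef0 // subn0 !bin0 -addrA.
congr (_ + _); under eq_bigr do rewrite lift0 DcoefS // intrB intrM -!pmulrn mulrBl.
rewrite sumrB -sumrN mulr_sumr; congr (_ + _); apply: eq_bigr => i _.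
by rewrite exprS; ring.
Qed.

Section ClosedForms.
Variable K : fieldType.
Hypothesis two_neq0 : (2 : K) != 0.

Lemma four_neq0 : (4 : K) != 0.
Proof. by rewrite (_ : 4 = 2 * 2) ?mulf_neq0 //; ring. Qed.

Lemma dickson2_quarter n : dickson2 n (4^-1 : K) = n.+1%:R / 2 ^+ n.
Proof.
move: n; apply: dickson2_unique => [||n]; rewrite ?expr0 ?divr1 ?divff //.
rewrite !exprS; field.
by rewrite expf_neq0 // four_neq0 two_neq0.
Qed.

Lemma Dpoly_quarter n : (Dpoly n (1 : K)).[4^-1] = ((3 * n)%:R - 1) / 2 ^+ n.
Proof.
case: n => [|[|n]].
- by rewrite Dpoly0_horner muln0 sub0r expr0 divr1.
- by rewrite Dpoly1_horner expr1; field.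
rewrite DpolySS_horner !dickson2_quarter !exprS; field.
by rewrite expf_neq0 // two_neq0 four_neq0.
Qed.

End ClosedForms.

Section RootParametrisation.
Variables (K : fieldType) (y : K).
Hypothesis y_neq_half : 2 * y - 1 != 0.

Lemma dickson2_root n :
  dickson2 n (y * (1 - y)) = (y ^+ n.+1 - (1 - y) ^+ n.+1) / (2 * y - 1).
Proof.
by move: n; apply: dickson2_unique => [||n]; rewrite ?exprS; field.
Qed.

Lemma Dpoly_root n : (Dpoly n (1 : K)).[y * (1 - y)] =
  ((2 - y) * y ^+ n - (y + 1) * (1 - y) ^+ n) / (2 * y - 1).
Proof.
case: n => [|[|n]].
- by rewrite Dpoly0_horner !expr0; field.
- by rewrite Dpoly1_horner !expr1; field.
by rewrite DpolySS_horner !dickson2_root !exprS; field.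
Qed.

End RootParametrisation.

Lemma map_Dpoly (R S : comNzRingType) (f : {rmorphism R -> S}) n (a : R) :
  map_poly f (Dpoly n a) = Dpoly n (f a).
Proof.
case: n => [|n]; first by rewrite /Dpoly rmorphN rmorph1.
rewrite /Dpoly rmorph_sum; apply: eq_bigr => i _.
rewrite -!mul_polyC rmorphM rmorphXn rmorphN /= map_polyX map_polyC /=.
by rewrite rmorphM rmorph_int rmorphXn.
Qed.

Section FinField.
Variable K : finFieldType.

Lemma expf_card_pred (a : K) : a != 0 -> a ^+ #|K|.-1 = 1.
Proof.
move=> a0; apply: (mulIf a0); rewrite mul1r -exprSr prednK ?expf_card //.
by apply/card_gt0P; exists 0.
Qed.

Lemma expf_eq_mod (a : K) n1 n2 : (0 < n1)%N -> (0 < n2)%N ->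
  n1 = n2 %[mod #|K|.-1] -> a ^+ n1 = a ^+ n2.
Proof.
move=> n1_gt0 n2_gt0 eq_n12; have [->|a0] := eqVneq a 0.
  by rewrite !expr0n !eqn0Ngt n1_gt0 n2_gt0.
have a1 := expf_card_pred a0.
by rewrite -(expr_mod n1 a1) eq_n12 (expr_mod n2 a1).
Qed.

Lemma finField_sqrt (c : K) h : #|K| = (2 * h).+1 -> c ^+ h = 1 ->
  exists r : K, r ^+ 2 = c.
Proof.
move=> cardK ch.
pose P : {poly K} := 'X^2 - c%:P.
have P_dvd : P %| \prod_(x : K) ('X - x%:P).
  rewrite -finField_genPoly cardK.
  have -> : 'X^((2 * h).+1) - 'X = 'X * (('X^2) ^+ h - c%:P ^+ h) :> {poly K}.
    by rewrite -rmorphXn /= ch -exprM mulrBr mulr1 -exprS.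
  by apply: dvdp_mull; rewrite subrXX dvdp_mulr.
have [m eq_P] := dvdp_prod_XsubC P_dvd.
have := eqp_size eq_P; rewrite size_prod_XsubC /P size_XnsubC //.
case def_s: (mask m (index_enum K)) => [|x s] //= _; exists x.
have : root P x by rewrite (eqp_root eq_P) def_s root_prod_XsubC mem_head.
by rewrite /P rootE !hornerE subr_eq0 => /eqP.
Qed.

End FinField.

Section FiniteExtension.
Variables (F : finFieldType) (L : fieldExtType F).
Local Notation finL := (FinFieldExtType L).

Lemma card_finFieldExt : #|finL| = (#|F| ^ \dim {:L})%N.
Proof.
have := card_vspace (fullv : {vspace finvect_type L}).
by rewrite (@card_vspacef F (finvect_type L)).
Qed.

Lemma expf_ext_eq_mod (a : L) n1 n2 : (0 < n1)%N -> (0 < n2)%N ->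
  n1 = n2 %[mod (#|F| ^ \dim {:L}).-1] -> a ^+ n1 = a ^+ n2.
Proof. by rewrite -card_finFieldExt; apply: (@expf_eq_mod finL). Qed.

(* With [q = 2k + 1], [#|L| = 2h + 1] for [h = 2k (k + 1)], a multiple of [q - 1],
   so [d ^+ h = 1]. *)
Lemma quadratic_ext_sqrt (d : F) : odd #|F| -> \dim {:L} = 2%N ->
  exists r : L, r ^+ 2 = d%:A.
Proof.
move=> odd_q dimL; have [->|d0] := eqVneq d 0.
  by exists 0; rewrite scale0r expr0n.
have [k def_q] : exists k, #|F| = k.*2.+1.
  by exists #|F|./2; rewrite -[LHS](odd_double_half #|F|) odd_q.
apply: (@finField_sqrt finL _ (k.*2 * k.+1)).
  by rewrite card_finFieldExt dimL def_q -!mul2n; lia.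
have dq : d ^+ k.*2 = 1 by have := expf_card_pred d0; rewrite def_q.
by rewrite exprM -in_algE -rmorphXn /= dq scale1r expr1n.
Qed.

Lemma Dpoly_eq_mod (x0 : F) n1 n2 :
  odd #|F| -> (2 : F) != 0 -> \dim {:L} = 2%N -> 1 - 4 * x0 != 0 ->
  (0 < n1)%N -> (0 < n2)%N -> n1 = n2 %[mod (#|F| ^ 2).-1] ->
  (Dpoly n1 (1 : F)).[x0] = (Dpoly n2 (1 : F)).[x0].
Proof.
move=> odd_q two_F dimL disc0 n1_gt0 n2_gt0 eq_n12.
have [r r2] := quadratic_ext_sqrt (1 - 4 * x0) odd_q dimL.
have two_L : (2 : L) != 0 by rewrite -(rmorph_nat (in_alg L)) fmorph_eq0.
pose y := (1 + r) / 2.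
have y_half : 2 * y - 1 = r by rewrite /y; field.
have r0 : r != 0.
  by apply: contraNneq disc0 => r0; rewrite -(fmorph_eq0 (in_alg L)) /= -r2 r0 expr0n.
have x0_y : y * (1 - y) = x0%:A.
  have r2_x0 : r ^+ 2 = 1 - 4 * x0%:A.
    by rewrite r2 -!in_algE rmorphB rmorph1 rmorphM rmorph_nat.
  apply: (mulIf (four_neq0 two_L)); rewrite (_ : y * (1 - y) * 4 = 1 - r ^+ 2).
    by rewrite r2_x0; ring.
  by rewrite /y; field.
have eq_n12L : n1 = n2 %[mod (#|F| ^ \dim {:L}).-1] by rewrite dimL.
apply: (fmorph_inj (in_alg L)); rewrite -!horner_map /= -x0_y !map_Dpoly rmorph1.
by rewrite !Dpoly_root ?y_half // !(expf_ext_eq_mod _ n1_gt0 n2_gt0 eq_n12L).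
Qed.

End FiniteExtension.

Lemma pchar_two_neq0 (R : nzRingType) p : p \in [pchar R] -> (2 < p)%N ->
  (2 : R) != 0.
Proof.
move=> charRp lt2p; rewrite -(dvdn_pcharf charRp 2).
by apply: contraTN lt2p => /dvdn_leq; rewrite -leqNgt; apply.
Qed.

Theorem theorem2p4 (p e : nat) (F : finFieldType) (L : fieldExtType F)
  (hp : prime p) (hp3 : (3 < p)%N) (he : (0 < e)%N)
  (hchar : p \in [pchar F]) (hcard : #|F| = (p ^ e)%N)
  (hdim : \dim {:L} = 2%N) :
  (forall n : nat,
     (Dpoly n (1 : F)).[4^-1] = ((3 * n)%:R - 1) / 2 ^+ n) /\
  (forall (n : nat) (y : L), y != 2^-1 ->
     (map_poly (GRing.in_alg L) (Dpoly n (1 : F))).[y * (1 - y)]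
       = ((2 - y) * y ^+ n - (y + 1) * (1 - y) ^+ n) / (2 * y - 1)) /\
  (forall n1 n2 : nat, (0 < n1)%N -> (0 < n2)%N ->
     n1 = n2 %[mod (p ^ e) ^ 2 - 1] ->
     forall x0 : F, x0 != 4^-1 ->
       (Dpoly n1 (1 : F)).[x0] = (Dpoly n2 (1 : F)).[x0]).
Proof.
have lt2p : (2 < p)%N by apply: leq_trans hp3.
have two_F : (2 : F) != 0 := pchar_two_neq0 hchar lt2p.
have two_L : (2 : L) != 0 := pchar_two_neq0 (etrans (pchar_lalg L p) hchar) lt2p.
have odd_q : odd #|F|.
  rewrite hcard oddX; have [p2|->] := even_prime hp; last by rewrite orbT.
  by rewrite p2 in lt2p.
split; first exact: Dpoly_quarter.
split=> [n y y_half | n1 n2 n1_gt0 n2_gt0 eq_n12 x0 x0_quarter].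
  rewrite map_Dpoly rmorph1 Dpoly_root //; apply: contra y_half.
  by rewrite subr_eq0 => /eqP two_y; rewrite -[y](mulKf two_L) two_y mulr1.
apply: (@Dpoly_eq_mod F L) => //; last by rewrite hcard -subn1.
apply: contra x0_quarter; rewrite subr_eq0 => /eqP four_x0.
by rewrite -[x0](mulKf (four_neq0 two_F)) -four_x0 mulr1.
Qed.
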